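(* Let $\sigma_0\ge\sigma_1\ge\dots\ge\sigma_{r-1}>0$ with $\sum_{i=0}^{r-1}\sigma_i^2=1$ and $r\le\min(N_1,N_2)$ (with $\sigma_1:=0$ if $r=1$), let $|\sigma\rangle=\sum_{i=0}^{r-1}\sigma_i|ii\rangle\in\mathbb{C}^{N_1}\otimes\mathbb{C}^{N_2}$, let $\lambda\in[0,1]$ and $Q=(1-\lambda)\frac{\mathbb{I}_{N_1N_2}}{N_1N_2}+\lambda|\sigma\rangle\langle\sigma|$. Then $Q^{T_1}\ge0$ if and only if $\lambda\le\frac{1}{1+N_1N_2\sigma_0\sigma_1}$.
   Context: $Q^{T_1}$ denotes the partial transpose of $Q$ with respect to the first tensor factor in the computational basis: $(|a\rangle\langle b|\otimes|c\rangle\langle d|)^{T_1}=|b\rangle\langle a|\otimes|c\rangle\langle d|$, extended linearly. *)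

(* Complex numbers: R[i] over a real closed field R
   (mathcomp-real-closed); the paper's reals are the case R = real numbers. *)
From HB Require Import structures.
From mathcomp Require Import all_boot all_order all_algebra.
From mathcomp Require Import complex.
Set Implicit Arguments. Unset Strict Implicit. Unset Printing Implicit Defensive.
Import Order.TTheory GRing.Theory Num.Theory.
Local Open Scope ring_scope.

Section Defs.
Variable R : rcfType.
Local Notation C := (complex R).

Definition adjmx (m n : nat) (A : 'M[C]_(m, n)) : 'M[C]_(n, m) :=
  (map_mx Num.conj A)^T.

(* positive semidefinite (A >= 0): <v|A|v> is real and nonnegative for all v *)
Definition psdmx (n : nat) (A : 'M[C]_n) : Prop :=
  forall v : 'cV[C]_n, 0 <= (adjmx v *m A *m v) 0 0.

(* Basis of C^N1 (x) C^N2: |a>|c> is the basis vector with index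
   mxvec_index a c.  Hence |a><b| (x) |c><d| = delta_mx (idx a c) (idx b d). *)
Definition ptrans1 (N1 N2 : nat) (M : 'M[C]_(N1 * N2)) : 'M[C]_(N1 * N2) :=
  \sum_(a < N1) \sum_(b < N1) \sum_(c < N2) \sum_(d < N2)
     M (mxvec_index a c) (mxvec_index b d)
       *: delta_mx (mxvec_index b c) (mxvec_index a d).

Definition sigket (N1 N2 r : nat) (sigma : nat -> R) : 'cV[C]_(N1 * N2) :=
  (mxvec (\matrix_(a < N1, c < N2)
            (if ((a : nat) == c) && ((a : nat) < r)%N then real_complex R (sigma a)
             else 0)))^T.

Definition Qmx (N1 N2 r : nat) (sigma : nat -> R) (lam : R) : 'M[C]_(N1 * N2) :=
  real_complex R ((1 - lam) / (N1 * N2)%:R) *: 1%:M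
  + real_complex R lam *: (sigket N1 N2 r sigma *m adjmx (sigket N1 N2 r sigma)).

End Defs.

From HB Require Import structures.
From mathcomp Require Import all_boot all_order all_algebra.
From mathcomp Require Import complex ring lra zify.
Set Implicit Arguments.
Unset Strict Implicit.
Unset Printing Implicit Defensive.

Import Order.TTheory GRing.Theory Num.Theory.
Local Open Scope ring_scope.
Local Open Scope complex_scope.

(* In the product basis, the identity part of Q contributes a ||v||^2 to
   <v|Q^{T_1}|v>, with a = (1 - lam)/(N1 N2), whereas the partial transpose of
   the rank-one part only couples the coefficients v_ij and v_ji, with weight
   lam sigma_i sigma_j.  Pairing the terms (i,j) and (j,i) therefore writes the
   form as a sum of 2x2 forms a (|p|^2 + |q|^2) + lam sigma_i sigma_j
   (conj q p + conj p q), nonnegative as soon as lam sigma_i sigma_j <= a, and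
   sigma_i sigma_j <= sigma_0 sigma_1 for i <> j.  Conversely, on the singlet
   |01> - |10> the form equals 2 (a - lam sigma_0 sigma_1). *)

Section IndicatorSums.
Variable V : nmodType.

Lemma sum_if_eq (T : finType) (j : T) (F : T -> V) :
  \sum_i (if i == j then F i else 0) = F j.
Proof. by rewrite -big_mkcond big_pred1_eq. Qed.

Lemma sum_if_eq_sym (T : finType) (j : T) (F : T -> V) :
  \sum_i (if j == i then F i else 0) = F j.
Proof. by rewrite -(sum_if_eq j F); apply: eq_bigr => i _; rewrite eq_sym. Qed.

Lemma sum2_if_eq (T U : finType) (x0 : T) (y0 : U) (F : T -> U -> V) :
  \sum_x \sum_y (if (x == x0) && (y == y0) then F x y else 0) = F x0 y0.
Proof.
rewrite -(sum_if_eq x0 (fun x => F x y0)); apply: eq_bigr => x _.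
by case: (x == x0); rewrite /= ?sum_if_eq // big1.
Qed.

End IndicatorSums.

Lemma sumr_widen_le (V : numDomainType) (m n : nat) (mn : (m <= n)%N)
    (f : 'I_n -> V) :
  (forall i, 0 <= f i) -> \sum_(i < m) f (widen_ord mn i) <= \sum_i f i.
Proof.
move=> f_ge0; rewrite (bigID (fun i : 'I_n => (i < m)%N)) /= (big_ord_narrow mn).
by rewrite lerDl sumr_ge0.
Qed.

Lemma sumr_ge0_sym (V : numDomainType) (T : finType) (g : T -> T -> V) :
  (forall a b, 0 <= g a b + g b a) -> 0 <= \sum_a \sum_b g a b.
Proof.
move=> g_ge0; suff : 0 <= 2%:R * \sum_a \sum_b g a b by rewrite pmulr_rge0 ?ltr0n.
rewrite mulr2n mulrDl mul1r [X in _ + X]exchange_big -big_split /=.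
apply: sumr_ge0 => a _; rewrite -big_split; apply: sumr_ge0 => b _; exact: g_ge0.
Qed.

Lemma nonincreasing_pair_le (R : realDomainType) (s : nat -> R) (r : nat) :
  (forall i, (i < r)%N -> 0 <= s i) ->
  (forall i, (i.+1 < r)%N -> s i.+1 <= s i) ->
  forall a b, a != b -> (a < r)%N -> (b < r)%N -> s a * s b <= s 0%N * s 1%N.
Proof.
move=> s_ge0 s_noninc a b neq_ab.
wlog ab : a b neq_ab / (a < b)%N => [sym_case|ar br].
  have [ab|ba|eq_ab] := ltngtP a b; first exact: sym_case.
    by move=> ar br; rewrite mulrC; apply: sym_case; rewrite // eq_sym.
  by rewrite eq_ab eqxx in neq_ab.
have homo_s : {in gtn r &, {homo s : j i / (i <= j)%N >-> j <= i}}.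
  apply: Order.NatMonotonyTheory.nonincn_inP => [i j _ jr k /andP[_ kj]|i _].
    exact: ltn_trans kj jr.
  exact: s_noninc.
by apply: ler_pM; [apply: s_ge0 | apply: s_ge0 | apply: homo_s | apply: homo_s];
  rewrite ?inE; lia.
Qed.

Section ComplexForms.
Variable R : rcfType.
Local Notation C := (complex R).

Lemma pair_form_ge0 (a s : R) (p q : C) :
  0 <= a -> 0 <= s -> (s <= a \/ p = q) ->
  0 <= a%:C * (p^* * p + q^* * q) + s%:C * (q^* * p + p^* * q).
Proof.
move=> a_ge0 s_ge0; case: p => p1 p2; case: q => q1 q2 sa_or_pq; simpc.
apply/andP; split; first by apply/eqP; ring.
case: sa_or_pq => [sa|[<- <-]].
  have h1 : 0 <= (a - s) * (p1 * p1 + p2 * p2 + (q1 * q1 + q2 * q2)).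
    by apply: mulr_ge0; [lra | rewrite -!expr2 !addr_ge0 ?sqr_ge0].
  have h2 : 0 <= s * ((p1 + q1) ^+ 2 + (p2 + q2) ^+ 2).
    by apply: mulr_ge0 => //; rewrite addr_ge0 ?sqr_ge0.
  nra.
have h : 0 <= (a + s) * (p1 * p1 + p2 * p2).
  by apply: mulr_ge0; [lra | rewrite -!expr2 !addr_ge0 ?sqr_ge0].
nra.
Qed.

Lemma conjc_natB_mul (b1 b2 : bool) : ~~ (b1 && b2) ->
  (b1%:R - b2%:R : C)^* * (b1%:R - b2%:R) = b1%:R + b2%:R.
Proof. by case: b1; case: b2 => // _; simpc. Qed.

Lemma conjc_natB_mulN (b1 b2 : bool) : ~~ (b1 && b2) ->
  (b2%:R - b1%:R : C)^* * (b1%:R - b2%:R) = - (b1%:R + b2%:R).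
Proof. by case: b1; case: b2 => // _; simpc. Qed.

End ComplexForms.

Section PartialTranspose.
Variables (R : rcfType) (N1 N2 : nat).
Local Notation C := (complex R).
Local Notation idx := (@mxvec_index N1 N2).

Lemma mxvec_index_eq a b c d : (idx a c == idx b d) = (a == b) && (c == d).
Proof.
apply/eqP/andP => [idx_ac_bd|[/eqP-> /eqP->]] //.
have := congr1 (enum_val \o cast_ord (esym (mxvec_cast N1 N2))) idx_ac_bd.
by rewrite /= /mxvec_index !cast_ordK !enum_rankK => -[-> ->].
Qed.

Lemma sum_mxvec_index (V : nmodType) (F : 'I_(N1 * N2) -> V) :
  \sum_k F k = \sum_a \sum_c F (idx a c).
Proof.
rewrite pair_bigA (reindex (uncurry idx)) /=; last exact: curry_mxvec_bij.
by apply: eq_bigr => -[a c].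
Qed.

Lemma ptrans1E (M : 'M[C]_(N1 * N2)) a b c d :
  ptrans1 M (idx b c) (idx a d) = M (idx a c) (idx b d).
Proof.
rewrite /ptrans1 summxE.
transitivity (\sum_(a' < N1) \sum_(b' < N1) \sum_(c' < N2) \sum_(d' < N2)
  if d' == d then if c' == c then if b' == b then if a' == a then
    M (idx a' c') (idx b' d') else 0 else 0 else 0 else 0).
  apply: eq_bigr => a' _; rewrite summxE; apply: eq_bigr => b' _.
  rewrite summxE; apply: eq_bigr => c' _; rewrite summxE; apply: eq_bigr => d' _.
  rewrite !mxE !mxvec_index_eq (eq_sym b) (eq_sym c) (eq_sym a) (eq_sym d).
  by case: (d' == d); case: (c' == c); case: (b' == b); case: (a' == a);
    rewrite /= ?mulr1 ?mulr0.
under eq_bigr do under eq_bigr do under eq_bigr do rewrite sum_if_eq.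
under eq_bigr do under eq_bigr do rewrite sum_if_eq.
under eq_bigr do rewrite sum_if_eq.
by rewrite sum_if_eq.
Qed.

Definition tcoef (v : 'cV[C]_(N1 * N2)) a c := v (idx a c) 0.

Lemma qform_tcoefE (A : 'M[C]_(N1 * N2)) (v : 'cV[C]_(N1 * N2)) :
  (adjmx v *m A *m v) 0 0 = \sum_a \sum_c \sum_b \sum_d
    (tcoef v a c)^* * A (idx a c) (idx b d) * tcoef v b d.
Proof.
rewrite mxE; under eq_bigr do rewrite mxE mulr_suml.
rewrite exchange_big sum_mxvec_index; apply: eq_bigr => a _; apply: eq_bigr => c _.
by rewrite sum_mxvec_index; apply: eq_bigr => b _; apply: eq_bigr => d _; rewrite !mxE.
Qed.

End PartialTranspose.

Section SchmidtState.
Variables (R : rcfType) (N1 N2 r : nat) (sigma : nat -> R).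
Hypotheses (rN1 : (r <= N1)%N) (rN2 : (r <= N2)%N).
Local Notation C := (complex R).
Local Notation idx := (@mxvec_index N1 N2).
Local Notation e1 := (widen_ord rN1).
Local Notation e2 := (widen_ord rN2).

Definition sigcoef (a : 'I_N1) (c : 'I_N2) : C :=
  if ((a : nat) == c) && (a < r)%N then (sigma a)%:C else 0.

Lemma conjc_sigcoef a c : (sigcoef a c)^* = sigcoef a c.
Proof. by rewrite /sigcoef; case: ifP => _; rewrite ?conjc_real ?conjc0. Qed.

Lemma QmxE lam a b c d :
  Qmx N1 N2 r sigma lam (idx a c) (idx b d) =
  ((1 - lam) / (N1 * N2)%:R)%:C * ((a == b) && (c == d))%:R
  + lam%:C * (sigcoef a c * sigcoef b d).
Proof.
rewrite /Qmx !mxE big_ord1 !mxE mxvec_index_eq !mxvecE !mxE.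
by rewrite -/(sigcoef a c) -/(sigcoef b d) (conjc_sigcoef b d : Num.conj _ = _).
Qed.

Lemma sigcoef_sum a c : sigcoef a c =
  \sum_(i < r) (if e1 i == a then if e2 i == c then (sigma i)%:C else 0 else 0).
Proof.
case ar: (a < r)%N; last first.
  rewrite /sigcoef ar andbF big1 // => i _.
  case: eqP => // e1i_a; move: (ltn_ord i).
  by rewrite -[X in (X < _)%N]/(val (e1 i)) e1i_a ar.
pose i0 : 'I_r := Ordinal ar.
rewrite (eq_bigr (fun i => if i == i0 then
   (if e2 i0 == c then (sigma i0)%:C else 0) else 0)); last first.
  move=> i _; have -> : (e1 i == a) = (i == i0) by rewrite -!val_eqE.
  by case: eqP => [->|].
by rewrite sum_if_eq /sigcoef ar andbT -val_eqE /=; case: eqP.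
Qed.

Lemma sum_sigcoef_mul (F : 'I_N1 -> 'I_N2 -> C) :
  \sum_a \sum_c sigcoef a c * F a c = \sum_(i < r) (sigma i)%:C * F (e1 i) (e2 i).
Proof.
transitivity (\sum_a \sum_c \sum_(i < r)
   (if e1 i == a then if e2 i == c then (sigma i)%:C * F a c else 0 else 0)).
  apply: eq_bigr => a _; apply: eq_bigr => c _; rewrite sigcoef_sum mulr_suml.
  apply: eq_bigr => i _; case: ifP => _; last by rewrite mul0r.
  by case: ifP => _; rewrite ?mul0r.
rewrite exchange_big /=; under eq_bigr do rewrite exchange_big /=.
rewrite exchange_big /=; apply: eq_bigr => i _.
by under eq_bigr do rewrite sum_if_eq_sym; rewrite sum_if_eq_sym.
Qed.

Lemma sum_sigcoef_cross (f : 'I_N1 -> 'I_N2 -> 'I_N1 -> 'I_N2 -> C) :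
  \sum_a \sum_c \sum_b \sum_d sigcoef b c * sigcoef a d * f a c b d =
  \sum_(i < r) \sum_(j < r)
    (sigma i)%:C * (sigma j)%:C * f (e1 j) (e2 i) (e1 i) (e2 j).
Proof.
transitivity (\sum_a \sum_d sigcoef a d * (\sum_b \sum_c sigcoef b c * f a c b d)).
  apply: eq_bigr => a _.
  rewrite exchange_big /=; under eq_bigr do rewrite exchange_big /=.
  rewrite exchange_big /=; apply: eq_bigr => d _.
  rewrite mulr_sumr; apply: eq_bigr => b _; rewrite mulr_sumr; apply: eq_bigr => c _.
  ring.
under eq_bigr do under eq_bigr do rewrite sum_sigcoef_mul.
rewrite sum_sigcoef_mul exchange_big; apply: eq_bigr => j _.
by rewrite mulr_sumr; apply: eq_bigr => i _; ring.
Qed.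

Lemma ptrans1_Qmx_qform lam (v : 'cV[C]_(N1 * N2)) :
  (adjmx v *m ptrans1 (Qmx N1 N2 r sigma lam) *m v) 0 0 =
  ((1 - lam) / (N1 * N2)%:R)%:C * (\sum_a \sum_c (tcoef v a c)^* * tcoef v a c)
  + lam%:C * (\sum_(i < r) \sum_(j < r) (sigma i)%:C * (sigma j)%:C *
               ((tcoef v (e1 j) (e2 i))^* * tcoef v (e1 i) (e2 j))).
Proof.
set al := (_ / _)%:C; set la := lam%:C.
pose X a c b d := (tcoef v a c)^* * tcoef v b d.
transitivity (\sum_a \sum_c \sum_b \sum_d
  (al * (if c == d then if b == a then X a c b d else 0 else 0)
   + la * (sigcoef b c * sigcoef a d * X a c b d))).
  rewrite qform_tcoefE; apply: eq_bigr => a _; apply: eq_bigr => c _.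
  apply: eq_bigr => b _; apply: eq_bigr => d _; rewrite ptrans1E QmxE /X.
  by case: (c == d); case: (b == a); rewrite /= ?mulr1 ?mulr0; ring.
rewrite -(sum_sigcoef_cross X) !mulr_sumr -big_split; apply: eq_bigr => a _.
rewrite !mulr_sumr -big_split; apply: eq_bigr => c _.
under eq_bigr do rewrite big_split; rewrite big_split /=; congr (_ + _).
  by under eq_bigr do rewrite -mulr_sumr sum_if_eq_sym; rewrite -mulr_sumr sum_if_eq.
by under eq_bigr do rewrite -mulr_sumr; rewrite -mulr_sumr.
Qed.

Lemma ptrans1_Qmx_psd lam m :
  0 <= lam -> (forall i, (i < r)%N -> 0 <= sigma i) ->
  (forall i j : 'I_r, i != j -> sigma i * sigma j <= m) ->
  0 <= (1 - lam) / (N1 * N2)%:R -> lam * m <= (1 - lam) / (N1 * N2)%:R ->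
  psdmx (ptrans1 (Qmx N1 N2 r sigma lam)).
Proof.
move=> lam_ge0 sigma_ge0 sigma_le_m al_ge0 lam_m_le v; rewrite ptrans1_Qmx_qform.
set al := (1 - lam) / _ in al_ge0 lam_m_le *.
pose U (i j : 'I_r) := tcoef v (e1 i) (e2 j).
have sq_ge0 (z : C) : 0 <= z^* * z by rewrite mulrC mulcJ_ge0.
have norm_le : \sum_i \sum_j (U i j)^* * U i j <=
               \sum_a \sum_c (tcoef v a c)^* * tcoef v a c.
  have row_ge0 a : 0 <= \sum_c (tcoef v a c)^* * tcoef v a c.
    by apply: sumr_ge0 => c _.
  apply: le_trans _ (sumr_widen_le rN1 row_ge0); apply: ler_sum => i _.
  exact: (@sumr_widen_le _ _ _ rN2
           (fun c => (tcoef v (e1 i) c)^* * tcoef v (e1 i) c)).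
apply: le_trans _ (lerD (ler_wpM2l _ norm_le) (lexx _)); last by rewrite ler0c.
rewrite !mulr_sumr -big_split /=; under eq_bigr do rewrite !mulr_sumr -big_split /=.
apply: sumr_ge0_sym => i j.
rewrite (_ : _ + _ = al%:C * ((U i j)^* * U i j + (U j i)^* * U j i)
    + (lam * (sigma i * sigma j))%:C * ((U j i)^* * U i j + (U i j)^* * U j i)).
  apply: pair_form_ge0 => //; first by rewrite !mulr_ge0 ?sigma_ge0.
  have [<-|neq_ij] := eqVneq i j; [by right | left].
  exact: le_trans (ler_wpM2l lam_ge0 (sigma_le_m _ _ neq_ij)) lam_m_le.
by rewrite /U !rmorphM /=; ring.
Qed.

Definition singlet (i j : 'I_r) : 'cV[C]_(N1 * N2) :=
  delta_mx (idx (e1 i) (e2 j)) 0 - delta_mx (idx (e1 j) (e2 i)) 0.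

Lemma ptrans1_Qmx_qform_singlet lam (i j : 'I_r) : i != j ->
  (adjmx (singlet i j) *m ptrans1 (Qmx N1 N2 r sigma lam) *m singlet i j) 0 0 =
  (2%:R * ((1 - lam) / (N1 * N2)%:R - lam * (sigma i * sigma j)))%:C.
Proof.
move=> neq_ij; rewrite ptrans1_Qmx_qform.
have e1_eq k l : (e1 k == e1 l) = (k == l) by rewrite -!val_eqE.
have e2_eq k l : (e2 k == e2 l) = (k == l) by rewrite -!val_eqE.
have coefE a c : tcoef (singlet i j) a c =
    ((a == e1 i) && (c == e2 j))%:R - ((a == e1 j) && (c == e2 i))%:R.
  by rewrite /tcoef !mxE !mxvec_index_eq !andbT.
have norm2 : \sum_a \sum_c (tcoef (singlet i j) a c)^* * tcoef (singlet i j) a c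
             = 2%:R.
  transitivity (\sum_a \sum_c ((if (a == e1 i) && (c == e2 j) then 1 else 0)
     + (if (a == e1 j) && (c == e2 i) then 1 else 0) : C)).
    apply: eq_bigr => a _; apply: eq_bigr => c _.
    rewrite coefE conjc_natB_mul -?mulrb //.
    apply/negP => /andP[/andP[/eqP -> _] /andP[]].
    by rewrite e1_eq (negbTE neq_ij).
  by under eq_bigr do rewrite big_split; rewrite big_split /= !sum2_if_eq.
have cross : \sum_(k < r) \sum_(l < r) (sigma k)%:C * (sigma l)%:C *
    ((tcoef (singlet i j) (e1 l) (e2 k))^* * tcoef (singlet i j) (e1 k) (e2 l))
  = - ((sigma i)%:C * (sigma j)%:C + (sigma j)%:C * (sigma i)%:C).
  transitivity (- (\sum_k \sum_l
    ((if (k == i) && (l == j) then (sigma k)%:C * (sigma l)%:C else 0)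
     + (if (k == j) && (l == i) then (sigma k)%:C * (sigma l)%:C else 0)))).
    rewrite -sumrN; apply: eq_bigr => k _; rewrite -sumrN; apply: eq_bigr => l _.
    rewrite !coefE !e1_eq !e2_eq [(l == i) && _]andbC [(l == j) && _]andbC.
    rewrite conjc_natB_mulN; first by rewrite -!mulrb; ring.
    apply/negP => /andP[/andP[/eqP -> _] /andP[]].
    by rewrite (negbTE neq_ij).
  under eq_bigr do rewrite big_split.
  rewrite big_split /=.
  by rewrite !(sum2_if_eq _ _ (fun k l : 'I_r => (sigma k)%:C * (sigma l)%:C)).
by rewrite norm2 cross !(rmorphM, rmorphB) rmorph_nat /=; ring.
Qed.

Lemma ptrans1_Qmx_psd_le lam : (1 < r)%N ->
  psdmx (ptrans1 (Qmx N1 N2 r sigma lam)) ->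
  lam * (sigma 0%N * sigma 1%N) <= (1 - lam) / (N1 * N2)%:R.
Proof.
move=> r_gt1 /(_ (singlet (Ordinal (ltnW r_gt1)) (Ordinal r_gt1))).
by rewrite ptrans1_Qmx_qform_singlet // ler0c pmulr_rge0 ?ltr0n // subr_ge0.
Qed.

End SchmidtState.

Theorem lemma4 (R : rcfType) (N1 N2 r : nat) (sigma : nat -> R) (lam : R) :
  (0 < r)%N -> (r <= minn N1 N2)%N ->
  (forall i : nat, (i < r)%N -> 0 < sigma i) ->
  (forall i : nat, (i.+1 < r)%N -> sigma i.+1 <= sigma i) ->
  \sum_(i < r) sigma i ^+ 2 = 1 ->
  0 <= lam <= 1 ->
  (psdmx (ptrans1 (Qmx N1 N2 r sigma lam)) <->
   lam <= 1 / (1 + (N1 * N2)%:R * sigma 0%N * (if (1 < r)%N then sigma 1%N else 0))).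
Proof.
move=> r_gt0 r_le_min sigma_gt0 sigma_noninc _ /andP[lam_ge0 lam_le1].
have rN1 : (r <= N1)%N by apply: leq_trans r_le_min (geq_minl _ _).
have rN2 : (r <= N2)%N by apply: leq_trans r_le_min (geq_minr _ _).
have sigma_ge0 i : (i < r)%N -> 0 <= sigma i by move/sigma_gt0/ltW.
have N_gt0 : 0 < (N1 * N2)%:R :> R.
  by rewrite ltr0n muln_gt0 (leq_trans r_gt0 rN1) (leq_trans r_gt0 rN2).
have al_ge0 : 0 <= (1 - lam) / (N1 * N2)%:R by rewrite divr_ge0 ?subr_ge0 // ltW.
set N := (N1 * N2)%:R in N_gt0 al_ge0 *; set s1 := if _ then _ else _.
have s01_ge0 : 0 <= sigma 0%N * s1.
  by rewrite mulr_ge0 ?sigma_ge0 // /s1; case: ifP => // /sigma_ge0.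
have -> : (lam <= 1 / (1 + N * sigma 0%N * s1)) =
          (lam * (sigma 0%N * s1) <= (1 - lam) / N).
  rewrite ler_pdivlMr ?ler_pdivlMr //; first by apply/idP/idP => ?; nra.
  by rewrite -mulrA ltr_wpDr // mulr_ge0 // ltW.
split=> [psd | bound].
  rewrite /s1; case: ifP => [r_gt1|_]; last by rewrite !mulr0.
  exact: (ptrans1_Qmx_psd_le rN1 rN2).
apply: (ptrans1_Qmx_psd rN1 rN2) bound => // i j neq_ij.
have r_gt1 : (1 < r)%N.
  by move: (ltn_ord i) (ltn_ord j) neq_ij; rewrite -val_eqE /= => ? ? /eqP; lia.
by rewrite /s1 r_gt1 (nonincreasing_pair_le sigma_ge0 sigma_noninc).
Qed.
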